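(* The twist polynomial of set systems satisfies the four-term relation: for every proper set system $D=(E,\mathcal{F})$ and every pair of distinct elements $a,b\in E$, $$\partial_{\omega_{D}}(z)+\partial_{\omega_{\widetilde{D'}_{ab}}}(z)-\partial_{\omega_{D'_{ab}}}(z)-\partial_{\omega_{\widetilde{D}_{ab}}}(z)=0.$$
   Context: A set system $D=(E,\mathcal{F})$ is a finite set $E$ together with a collection $\mathcal{F}$ of subsets of $E$ (feasible sets); proper means $\mathcal{F}\neq\emptyset$. $\triangle$ denotes symmetric difference. For $A\subseteq E$, the twist is $D*A=(E,\{A\triangle X: X\in\mathcal{F}\})$. The width $\omega(D)$ is the size of a largest feasible set minus the size of a smallest feasible set. The twist polynomial is $\partial_{\omega_D}(z)=\sum_{A\subseteq E} z^{\omega(D*A)}$. For distinct $a,b\in E$: handle sliding of $a$ over $b$ gives $\widetilde{D}_{ab}=(E,\mathcal{F}\triangle\{F\cup\{a\}\mid F\cup\{b\}\in\mathcal{F},\ F\subseteq E\setminus\{a,b\}\})$; exchanging handle ends of $a$ and $b$ gives $D'_{ab}=(E,\mathcal{F}\triangle\{F\cup\{a,b\}\mid F\in\mathcal{F},\ F\subseteq E\setminus\{a,b\}\})$; and $\widetilde{D'}_{ab}$ denotes the result of first exchanging handle ends of $a,b$ in $D$ and then sliding $a$ over $b$ in the resulting set system. *)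

From mathcomp Require Import all_boot all_order all_algebra.
Set Implicit Arguments. Unset Strict Implicit. Unset Printing Implicit Defensive.
Import GRing.Theory.

(* A set system on the ground set E (a finType) is given by its family of
   feasible sets F : {set {set E}}; it is proper iff F != set0. *)

Section SetSystems.
Variable E : finType.
Implicit Types (F : {set {set E}}) (A X : {set E}).

Definition symdiff A X : {set E} := (A :\: X) :|: (X :\: A).

Definition twist F A : {set {set E}} := [set symdiff A X | X in F].

(* width: size of a largest feasible set minus size of a smallest one.
   (For F nonempty; the min is taken with neutral #|E|, which is an upper
   bound for all feasible set sizes, so it equals the true minimum.) *)
Definition maxsize F : nat := \max_(X in F) #|X|.
Definition minsize F : nat := \big[minn/#|E|]_(X in F) #|X|.
Definition width F : nat := maxsize F - minsize F.

Definition twist_poly F : {poly int} := \sum_(A : {set E}) 'X^(width (twist F A)).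

Definition fsymdiff (F G : {set {set E}}) : {set {set E}} := (F :\: G) :|: (G :\: F).

Definition handle_slide F (a b : E) : {set {set E}} :=
  fsymdiff F [set a |: G | G in [set G : {set E} |
                 [&& a \notin G, b \notin G & (b |: G) \in F]]].

Definition handle_exchange F (a b : E) : {set {set E}} :=
  fsymdiff F [set (a |: (b |: G)) | G in [set G in F |
                 (a \notin G) && (b \notin G)]].
End SetSystems.

From mathcomp Require Import all_boot all_order all_algebra.
From mathcomp Require Import zify.
Import Order.TTheory GRing.Theory.

Set Implicit Arguments.
Unset Strict Implicit.
Unset Printing Implicit Defensive.

(* The relation holds twist by twist.  Sliding [a] over [b] only toggles sets
   [a |: G] whose partner [b |: G] is feasible, and exchanging handle ends only
   toggles sets [a |: (b |: G)] whose partner [G] is feasible; after twisting by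
   [A] each toggled set has the size of its partner as soon as [a] and [b] lie
   on the same side of [A] (sliding), resp. on different sides (exchanging).
   The set of feasible sizes, hence the width, is then unchanged.  Since sliding
   and exchanging commute, the four terms of the relation cancel in pairs for
   every [A]. *)

Section SymdiffWidth.
Variable E : finType.
Implicit Types (F S : {set {set E}}) (A G X : {set E}).

Lemma mem_symdiff A X x : (x \in symdiff A X) = (x \in A) (+) (x \in X).
Proof. by rewrite /symdiff !inE; case: (x \in A); case: (x \in X). Qed.

Lemma card_symdiff_setU1 A G x : x \notin G ->
  #|symdiff A (x |: G)| + (x \in A) = #|symdiff A G| + (x \notin A).
Proof.
move=> xG.
have xAG : (x \in symdiff A G) = (x \in A) by rewrite mem_symdiff (negbTE xG) addbF.
case xA: (x \in A) => /=.
- have -> : symdiff A (x |: G) = symdiff A G :\ x.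
    apply/setP => y; rewrite !(inE, mem_symdiff).
    by case: eqVneq => [->|] /=; rewrite ?xA ?(negbTE xG).
  by rewrite [#|symdiff A G|](cardsD1 x) xAG xA addn0 addnC.
- have -> : symdiff A (x |: G) = x |: symdiff A G.
    apply/setP => y; rewrite !(inE, mem_symdiff).
    by case: eqVneq => [->|] /=; rewrite ?xA ?(negbTE xG).
  by rewrite cardsU1 xAG xA addn0 addnC.
Qed.

Lemma mem_fsymdiff F S X : (X \in fsymdiff F S) = (X \in F) (+) (X \in S).
Proof. by rewrite !inE; case: (X \in F); case: (X \in S). Qed.

Lemma leq_maxsize F X : X \in F -> #|X| <= maxsize F.
Proof. exact: leq_bigmax_cond. Qed.

Lemma geq_minsize F X : X \in F -> minsize F <= #|X|.
Proof.
move=> XF; rewrite /minsize -minEnat.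
exact: (bigmin_le_cond _ (fun Y : {set E} => #|Y|) XF).
Qed.

Lemma minsize_le_card F : minsize F <= #|E|.
Proof. by rewrite /minsize -minEnat bigmin_idl -leEnat ge_min lexx. Qed.

Definition sizes_within (F1 F2 : {set {set E}}) : Prop :=
  {in F1, forall X, exists2 Y, Y \in F2 & #|Y| = #|X|}.

Lemma maxsize_le (F1 F2 : {set {set E}}) :
  sizes_within F1 F2 -> maxsize F1 <= maxsize F2.
Proof. by move=> sF12; apply/bigmax_leqP => X /sF12 [Y YF2 <-]; apply: leq_maxsize. Qed.

Lemma minsize_ge (F1 F2 : {set {set E}}) :
  sizes_within F1 F2 -> minsize F2 <= minsize F1.
Proof.
move=> sF12; rewrite {2}/minsize -minEnat -leEnat.
apply: le_bigmin => [|X /sF12 [Y YF2 <-]]; [exact: minsize_le_card | exact: geq_minsize].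
Qed.

Lemma width_eq_sizes (F1 F2 : {set {set E}}) :
  sizes_within F1 F2 -> sizes_within F2 F1 -> width F1 = width F2.
Proof.
move=> sF12 sF21; rewrite /width.
by congr (_ - _); apply/eqP; rewrite eqn_leq ?maxsize_le ?minsize_ge.
Qed.

Lemma width_twist_fsymdiff_imset A F S (f g : {set E} -> {set E}) :
    {in S, forall G, g G \in F /\ g G \notin f @: S} ->
    {in S, forall G, #|symdiff A (f G)| = #|symdiff A (g G)|} ->
  width (twist (fsymdiff F (f @: S)) A) = width (twist F A).
Proof.
move=> partner card_partner; apply: width_eq_sizes => _ /imsetP [X XFH ->].
- move: XFH; rewrite mem_fsymdiff; case XF: (X \in F) => /=.
    by exists (symdiff A X) => //; apply: imset_f.
  case/imsetP=> G GS ->; have [gGF _] := partner G GS.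
  by exists (symdiff A (g G)); [apply: imset_f | rewrite card_partner].
- case XH: (X \in f @: S).
    case/imsetP: XH => G GS ->; have [gGF gGH] := partner G GS.
    exists (symdiff A (g G)); last by rewrite card_partner.
    by apply: imset_f; rewrite mem_fsymdiff gGF (negbTE gGH).
  by exists (symdiff A X) => //; apply: imset_f; rewrite mem_fsymdiff XFH XH.
Qed.

End SymdiffWidth.

Section Handles.
Variables (E : finType) (a b : E).
Hypothesis neq_ab : a != b.
Implicit Types (F : {set {set E}}) (A G X : {set E}).

Lemma card_symdiff_slide A G : a \notin G -> b \notin G ->
  (a \in A) = (b \in A) -> #|symdiff A (a |: G)| = #|symdiff A (b |: G)|.
Proof.
move=> aG bG eq_ab_A.
have := card_symdiff_setU1 A aG; have := card_symdiff_setU1 A bG.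
rewrite eq_ab_A; lia.
Qed.

Lemma card_symdiff_exchange A G : a \notin G -> b \notin G ->
  (a \in A) != (b \in A) -> #|symdiff A (a |: (b |: G))| = #|symdiff A G|.
Proof.
move=> aG bG neq_ab_A.
have abG : a \notin b |: G by rewrite !inE negb_or neq_ab aG.
have := card_symdiff_setU1 A abG; have := card_symdiff_setU1 A bG.
by case: (a \in A) (b \in A) neq_ab_A => [] [] //=; lia.
Qed.

Lemma width_twist_slide A F : (a \in A) = (b \in A) ->
  width (twist (handle_slide F a b) A) = width (twist F A).
Proof.
move=> eq_ab_A; apply: (width_twist_fsymdiff_imset (g := fun G => b |: G)) => G;
  rewrite inE => /and3P [aG bG bGF]; last exact: card_symdiff_slide.
split=> //; apply/negP => /imsetP [G' _ /setP/(_ a)].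
by rewrite !inE eqxx (negbTE neq_ab) (negbTE aG).
Qed.

Lemma width_twist_exchange A F : (a \in A) != (b \in A) ->
  width (twist (handle_exchange F a b) A) = width (twist F A).
Proof.
move=> neq_ab_A; apply: (width_twist_fsymdiff_imset (g := id)) => G;
  rewrite inE => /and3P [GF aG bG]; last exact: card_symdiff_exchange.
by split=> //; apply/negP => /imsetP [G' _ /setP/(_ a)]; rewrite !inE eqxx (negbTE aG).
Qed.

Lemma mem_handle_slide F X : (X \in handle_slide F a b) =
  (X \in F) (+) [&& a \in X, b \notin X & b |: (X :\ a) \in F].
Proof.
rewrite mem_fsymdiff; congr (_ (+) _).
apply/imsetP/and3P => [[G] | [aX bX bXF]].
  rewrite inE => /and3P [aG bG bGF] ->.
  by rewrite setU1K // !inE eqxx eq_sym (negbTE neq_ab) (negbTE bG).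
exists (X :\ a); last by rewrite setD1K.
by rewrite inE bXF !inE eqxx (negbTE bX) andbF.
Qed.

Lemma mem_handle_exchange F X : (X \in handle_exchange F a b) =
  (X \in F) (+) [&& a \in X, b \in X & X :\ a :\ b \in F].
Proof.
rewrite mem_fsymdiff; congr (_ (+) _).
apply/imsetP/and3P => [[G] | [aX bX XF]].
  rewrite inE => /and3P [GF aG bG] ->.
  have abG : a \notin b |: G by rewrite !inE negb_or neq_ab aG.
  by rewrite !setU1K // !inE !eqxx orbT.
exists (X :\ a :\ b); first by rewrite inE XF !inE !eqxx andbF.
by rewrite setD1K ?setD1K // !inE eq_sym neq_ab.
Qed.

Lemma handle_slide_exchangeC F :
  handle_slide (handle_exchange F a b) a b = handle_exchange (handle_slide F a b) a b.
Proof.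
apply/setP => X.
rewrite (mem_handle_slide (handle_exchange F a b)).
rewrite (mem_handle_exchange (handle_slide F a b)).
have -> : (b |: (X :\ a) \in handle_exchange F a b) = (b |: (X :\ a) \in F).
  by rewrite mem_handle_exchange !inE eqxx (negbTE neq_ab) /= addbF.
have -> : (X :\ a :\ b \in handle_slide F a b) = (X :\ a :\ b \in F).
  by rewrite mem_handle_slide !inE eqxx andbF /= addbF.
rewrite mem_handle_slide mem_handle_exchange.
by case: (a \in X); case: (b \in X); rewrite /= ?addbF.
Qed.

End Handles.

Local Open Scope ring_scope.

Theorem theorem3p7 (E : finType) (F : {set {set E}}) (a b : E) :
  F != set0 -> a != b ->
  twist_poly F + twist_poly (handle_slide (handle_exchange F a b) a b)
  - twist_poly (handle_exchange F a b) - twist_poly (handle_slide F a b) = 0.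
Proof.
move=> _ neq_ab; rewrite /twist_poly -big_split /= -!sumrB; apply: big1 => A _.
case: (eqVneq (a \in A) (b \in A)) => [eq_ab_A | neq_ab_A].
- by rewrite !width_twist_slide // addrK subrr.
- by rewrite handle_slide_exchangeC // !width_twist_exchange // addrAC addrK subrr.
Qed.
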